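(* For every integer $n\geq 2$, let $o_n=|\{i: K_i=1,\ 1\le i\le n\}|$ and $t_n=|\{i: K_i=2,\ 1\le i\le n\}|$. Then \[\frac14\le \frac{o_n}{t_n}\le 4 .\]
   Context: $K=(K_n)_{n\ge1}$ denotes the classical Kolakoski sequence: the unique infinite sequence over the alphabet $\{1,2\}$ with $K_1=1$ whose sequence of run lengths equals $K$ itself (a run is a maximal block of consecutive equal symbols). Its first terms are $1,2,2,1,1,2,1,2,2,1,2,2,1,1,\dots$ *)

From mathcomp Require Import all_boot all_order all_algebra.
Set Implicit Arguments. Unset Strict Implicit. Unset Printing Implicit Defensive.

(* Sequences are functions nat -> nat, indexed from 1 (index 0 is ignored). *)

Fixpoint run_start (L : nat -> nat) (j : nat) : nat :=
  match j with
  | 0 => 1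
  | 1 => 1
  | j'.+1 => run_start L j' + L j'
  end.

(* K has run-length sequence L: positions 1,2,... are partitioned into
   consecutive blocks of lengths L 1, L 2, ...; K is constant on each block
   and takes different values on consecutive blocks (so the blocks are
   exactly the maximal runs). *)
Definition has_run_lengths (K L : nat -> nat) : Prop :=
  (forall j, 0 < j -> 0 < L j) /\
  (forall j i, 0 < j -> run_start L j <= i < run_start L j.+1 ->
     K i = K (run_start L j)) /\
  (forall j, 0 < j -> K (run_start L j.+1) <> K (run_start L j)).

Definition is_kolakoski (K : nat -> nat) : Prop :=
  (forall i, 0 < i -> K i = 1 \/ K i = 2) /\
  K 1 = 1 /\
  has_run_lengths K K.

Definition count_val (K : nat -> nat) (v n : nat) : nat :=
  #|[set i : 'I_n.+1 | (0 < (i : nat)) && (K i == v)]|.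
Definition ones (K : nat -> nat) (n : nat) : nat := count_val K 1 n.
Definition twos (K : nat -> nat) (n : nat) : nat := count_val K 2 n.

From mathcomp Require Import all_boot all_order all_algebra zify lra.

(* Since K is its own run-length sequence and takes values in {1,2}, every
   run of K has length at most 2, so K never contains three consecutive equal
   letters.  For a two-letter sequence without such triples, each occurrence
   of one letter v beyond the trailing block is "paid for" by the next
   occurrence of the other letter w, which gives the invariant
       #v(1..n) <= 2 * #w(1..n) + (number of trailing v's, at most 2).
   As K 1 = 1 and K 2 = 2, both letters occur among the first n >= 2 terms,
   hence #v <= 2 * #w + 2 <= 4 * #w for both choices of (v, w), which is
   the claim after clearing denominators. *)

Definition cnt (K : nat -> nat) (v n : nat) : nat :=
  \sum_(i < n.+1) ((0 < i) && (K i == v) : nat).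

Lemma count_valE (K : nat -> nat) (v n : nat) : count_val K v n = cnt K v n.
Proof.
rewrite /count_val /cnt -sum1_card big_mkcond /=.
by apply: eq_bigr => i _; rewrite inE; case: (_ && _).
Qed.

Lemma cnt0 (K : nat -> nat) (v : nat) : cnt K v 0 = 0.
Proof. by rewrite /cnt big_ord_recr big_ord0. Qed.

Lemma cntS (K : nat -> nat) (v n : nat) :
  cnt K v n.+1 = cnt K v n + (K n.+1 == v).
Proof. by rewrite /cnt big_ord_recr. Qed.

Lemma cnt_mono (K : nat -> nat) (v m n : nat) : m <= n -> cnt K v m <= cnt K v n.
Proof.
move=> /subnK <-; elim: (n - m) => [//|k IH].
by rewrite addSn cntS; apply: leq_trans IH (leq_addr _ _).
Qed.

Lemma cnt_pos (K : nat -> nat) (v i n : nat) :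
  0 < i <= n -> K i = v -> 0 < cnt K v n.
Proof.
case: i => [//|i] /andP[_ le_in] Ki.
by apply: (leq_trans _ (cnt_mono K v _ _ le_in)); rewrite cntS Ki eqxx addn1.
Qed.

Section Runs.

Variables K L : nat -> nat.
Hypothesis HKL : has_run_lengths K L.

Lemma run_startS (j : nat) : 0 < j -> run_start L j.+1 = run_start L j + L j.
Proof. by case: j. Qed.

Lemma in_some_run (i : nat) : 0 < i ->
  exists2 j, 0 < j & run_start L j <= i < run_start L j.+1.
Proof.
have [L_gt0 _] := HKL.
elim: i => [//|[|i] IH] _.
  by exists 1 => //=; have := L_gt0 1 isT; lia.
have [j j_gt0 /andP[lo hi]] := IH isT.
case: (ltnP i.+2 (run_start L j.+1)) => hi'.
  by exists j => //; rewrite hi' andbT ltnW.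
exists j.+1 => //; rewrite (@run_startS j.+1 isT).
have := L_gt0 j.+1 isT; lia.
Qed.

Lemma no_triple_of_short_runs : (forall j, 0 < j -> L j <= 2) ->
  forall i, 0 < i -> K i = K i.+1 -> K i.+1 = K i.+2 -> False.
Proof.
move=> L_le2 i i_gt0 e1 e2.
have [_ [Kconst Kswitch]] := HKL.
have [j j_gt0 /andP[lo hi]] := @in_some_run i i_gt0.
(* The next run starts at m = i + 1 or i + 2, and K differs at m - 1, m. *)
have := L_le2 j j_gt0; have := @run_startS j j_gt0.
set m := run_start L j.+1 => m_def Lj_le2.
have Km1 : K m.-1 = K (run_start L j) by apply: Kconst => //; lia.
have Km_neq : K m <> K m.-1 by rewrite Km1; exact: Kswitch.
have [E|E] : m = i.+1 \/ m = i.+2 by lia.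
all: by apply: Km_neq; rewrite E /=; congruence.
Qed.

End Runs.

Definition trailing (K : nat -> nat) (v n : nat) : nat :=
  (K n == v) + [&& K n == v, K n.-1 == v & 1 < n].

Lemma trailing_le2 (K : nat -> nat) (v n : nat) : trailing K v n <= 2.
Proof. by rewrite /trailing; case: (K n == v); case: [&& _, _ & _]. Qed.

Lemma cnt_le_twice (K : nat -> nat) (v w : nat) :
  (forall i, 0 < i -> K i = v \/ K i = w) ->
  (forall i, 0 < i -> K i = v -> K i.+1 = v -> K i.+2 = v -> False) ->
  v != w -> forall n, cnt K v n <= 2 * cnt K w n + trailing K v n.
Proof.
move=> Kvw no_vvv v_neq_w; elim=> [|m IH]; first by rewrite !cnt0.
rewrite !cntS /trailing.
have [Km1|Km1] := Kvw m.+1 isT; rewrite Km1; last first.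
  by rewrite eq_sym (negbTE v_neq_w) eqxx /=; have := trailing_le2 K v m; lia.
move: IH; rewrite eqxx /trailing /=.
have [Km|Km] := eqVneq (K m) v; last by lia.
have [/andP[/eqP Km' m_gt1] | not_vvv] := boolP ((K m.-1 == v) && (1 < m)).
  by case: (no_vvv m.-1); rewrite ?prednK //; lia.
rewrite /= (negbTE v_neq_w).
by case: m {Km Km1 not_vvv} => [|m]; rewrite ?cnt0 //=; lia.
Qed.

(* The second term is 2, since the first run (of K 1 = 1) has length 1. *)
Lemma kolakoski_K2 (K : nat -> nat) : is_kolakoski K -> K 2 = 2.
Proof.
case=> Kval [K1 [_ [_ Kswitch]]].
by have := Kswitch 1 isT; rewrite /= K1; case: (Kval 2 isT) => ->.
Qed.

(* Both letters occur among K 1, K 2, so in every prefix of length n >= 2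
   each letter is at most four times as frequent as the other. *)
Lemma kolakoski_bound (K : nat -> nat) (v w n : nat) : is_kolakoski K ->
  (v = 1 /\ w = 2) \/ (v = 2 /\ w = 1) -> 2 <= n ->
  cnt K v n <= 4 * cnt K w n.
Proof.
move=> HK vw n_ge2; have [Kval [K1 HKK]] := HK.
have Kvw : forall i, 0 < i -> K i = v \/ K i = w by move=> i /Kval; lia.
have no_vvv : forall i, 0 < i -> K i = v -> K i.+1 = v -> K i.+2 = v -> False.
  move=> i i_gt0 e0 e1 e2; apply: (@no_triple_of_short_runs K K HKK _ i i_gt0);
    rewrite ?e0 ?e1 ?e2 // => j /Kval; lia.
have v_neq_w : v != w by apply/eqP; lia.
have w_occurs : 0 < cnt K w n.
  case: vw => [[_ ->] | [_ ->]].
    by apply: (@cnt_pos _ _ 2); [lia | exact: kolakoski_K2].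
  by apply: (@cnt_pos _ _ 1); lia.
have := @cnt_le_twice K v w Kvw no_vvv v_neq_w n; have := trailing_le2 K v n; lia.
Qed.

Local Open Scope ring_scope.
Import Order.TTheory GRing.Theory Num.Theory.

Theorem mainTheorem1 (K : nat -> nat) (HK : is_kolakoski K) (n : nat)
  (hn : (2 <= n)%N) :
  1 / 4 <= ((ones K n)%:Q / (twos K n)%:Q) /\
  ((ones K n)%:Q / (twos K n)%:Q) <= 4.
Proof.
rewrite /ones /twos !count_valE.
have ones_le : (cnt K 1 n <= 4 * cnt K 2 n)%N
  by apply: kolakoski_bound; [ | left | ].
have twos_le : (cnt K 2 n <= 4 * cnt K 1 n)%N
  by apply: kolakoski_bound; [ | right | ].
have twos_pos : 0 < (cnt K 2 n)%:Q.
  by rewrite ltr0n; apply: (@cnt_pos _ _ 2); [lia | exact: kolakoski_K2].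
have ones_leQ : (cnt K 1 n)%:Q <= 4 * (cnt K 2 n)%:Q.
  by rewrite -[4]/(4%:Q) -intrM -PoszM ler_int.
have twos_leQ : (cnt K 2 n)%:Q <= 4 * (cnt K 1 n)%:Q.
  by rewrite -[4]/(4%:Q) -intrM -PoszM ler_int.
by rewrite ler_pdivlMr // ler_pdivrMr //; split; lra.
Qed.
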